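(* Let $\ell\ge 3$ be an odd integer, let $k=\binom{\ell}{(\ell-1)/2}$, and let $n>k$. Define \[ \mathcal{J}=\{S\subseteq[\ell]: |S|\le \tfrac{\ell-1}{2}\},\quad \mathcal{K}=\{S\cup\{\ell+1,\dots,\ell+t\}: 1\le t\le n-\ell,\ S\subseteq[\ell],\ |S|=\tfrac{\ell-1}{2}\}, \] \[ \mathcal{L}=\{S\cup\{\ell+1,\dots,n\}: S\subseteq[\ell],\ |S|\ge \tfrac{\ell+1}{2}\}. \] Then $\mathcal{F}=\mathcal{J}\cup\mathcal{K}\cup\mathcal{L}$ is induced-$\mathcal{A}_{k+1}$-saturated in $\mathcal{B}_n$, and $|\mathcal{F}|=2^\ell+(n-\ell)k$. Consequently $\mathrm{isat}(n,\mathcal{A}_{k+1})\le 2^\ell+(n-\ell)k$.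
   Context: $\mathcal{B}_n$ denotes the Boolean lattice $(2^{[n]},\subseteq)$, $[n]=\{1,\dots,n\}$. A poset $\mathcal{P}'$ is an induced subposet of $\mathcal{P}$ if there is an injection $f$ with $u\le' v\iff f(u)\le f(v)$. A family $\mathcal{F}\subseteq 2^{[n]}$ (ordered by inclusion) is induced-$\mathcal{P}$-saturated if it contains no induced copy of $\mathcal{P}$ but every strictly larger family $\mathcal{F}'\subseteq 2^{[n]}$ does. $\mathrm{isat}(n,\mathcal{P})$ is the minimum size of such a family. $\mathcal{A}_m$ is the $m$-element antichain. *)

(* The ground set [n] = {1,...,n} is modelled by 'I_n,
   the element i+1 of [n] corresponding to the ordinal i. *)
From mathcomp Require Import all_boot.
From Stdlib Require Import ClassicalDescription.
Set Implicit Arguments. Unset Strict Implicit. Unset Printing Implicit Defensive.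

(* F contains an induced copy of the m-element antichain A_m:
   an injection f : A_m -> F with (u <= v in A_m, i.e. u = v) <-> f u \subset f v. *)
Definition has_induced_antichain (n m : nat) (F : {set {set 'I_n}}) : Prop :=
  exists f : 'I_m -> {set 'I_n},
    injective f /\ (forall i, f i \in F) /\ (forall i j, i = j <-> f i \subset f j).

Definition induced_antichain_saturated (n m : nat) (F : {set {set 'I_n}}) : Prop :=
  ~ has_induced_antichain m F /\
  forall G : {set {set 'I_n}}, F \proper G -> has_induced_antichain m G.

Definition sat_b (n m : nat) (G : {set {set 'I_n}}) : bool :=
  if excluded_middle_informative (induced_antichain_saturated m G) then true else false.

(* isat(n, A_m): minimum size of an induced-A_m-saturated family in B_n
   (the default 2^(2^n).+1 is never attained since such families exist). *)
Definition isat_antichain (n m : nat) : nat :=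
  \big[minn/(2 ^ (2 ^ n)).+1]_(G : {set {set 'I_n}} | sat_b m G) #|G|.

Definition lowset (n l : nat) : {set 'I_n} := [set i : 'I_n | i < l].
(* {a+1, ..., b} inside [n] *)
Definition segment (n a b : nat) : {set 'I_n} := [set i : 'I_n | a <= i < b].

Definition famJ (n l : nat) : {set {set 'I_n}} :=
  [set S : {set 'I_n} | (S \subset lowset n l) && (#|S| <= (l.-1)./2)].

Definition famK (n l : nat) : {set {set 'I_n}} :=
  [set X : {set 'I_n} | [exists t : 'I_n.+1, exists S : {set 'I_n},
     [&& 1 <= t <= n - l, S \subset lowset n l, #|S| == (l.-1)./2 &
         X == S :|: segment n l (l + t)]]].

Definition famL (n l : nat) : {set {set 'I_n}} :=
  [set X : {set 'I_n} | [exists S : {set 'I_n},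
     [&& S \subset lowset n l, (l.+1)./2 <= #|S| & X == S :|: segment n l n]]].

Definition famF (n l : nat) : {set {set 'I_n}} := famJ n l :|: famK n l :|: famL n l.

From mathcomp Require Import all_boot zify.
From Stdlib Require Import ClassicalDescription.
Set Implicit Arguments. Unset Strict Implicit. Unset Printing Implicit Defensive.

(* Write l = 2m+1. Every member X of F is S :|: {l+1, ..., l+t} with S = X :&: [l]
   its trace, and two members whose traces are comparable are themselves
   comparable. So an antichain in F has pairwise incomparable traces, and by
   Sperner's theorem at most 'C(l, m) = k members.
   Conversely, if X is not in F, a case analysis on #|X :&: [l]| against m
   produces a level t such that X is incomparable with all k sets
   S :|: {l+1, ..., l+t} with #|S| = m; together with X they form an antichain
   of size k+1. For the count, J and L split the subsets of [l] according to the
   size of their trace, and K contributes k sets at each of the n - l levels. *)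

Lemma leq_bin_half N a : 'C(N, a) <= 'C(N, N./2).
Proof.
have bin_incr b : b < N./2 -> 'C(N, b) <= 'C(N, b.+1).
  move=> lt_b; rewrite -(leq_pmul2l (ltn0Sn b)) mul_bin_left leq_mul2r.
  by apply/orP; right; lia.
have mono : {in [pred i | i <= N./2] &, {homo binomial N : i j / i <= j}}.
  apply: homo_leq_in => [//|y x z|i j|i _ /=]; [exact: leq_trans| |].
  - rewrite !inE => _ le_j k /andP[_ lt_kj]; exact: leq_trans (ltnW lt_kj) le_j.
  - by rewrite inE => /bin_incr.
have [le_a|lt_a] := leqP a N./2; first by apply: mono; rewrite ?inE.
have [le_aN|lt_Na] := leqP a N; last by rewrite bin_small.
by rewrite -bin_sub //; apply: mono; rewrite ?inE //; lia.
Qed.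

Section Sperner.
Variable T : finType.

Definition antichain (P : {set {set T}}) :=
  {in P &, forall A B : {set T}, A \subset B -> A = B}.

Lemma antichain_top (U : {set T}) (P : {set {set T}}) :
  P \subset powerset U -> antichain P -> U \in P -> P = [set U].
Proof.
move=> sPU antiP UP; apply/setP=> A; rewrite inE; apply/idP/eqP=> [AP|->//].
by apply: antiP => //; move/(subsetP sPU): AP; rewrite powersetE.
Qed.

Lemma lym (U : {set T}) (P : {set {set T}}) :
  P \subset powerset U -> antichain P ->
  \sum_(A in P) #|A|`! * (#|U| - #|A|)`! <= #|U|`!.
Proof.
move=> sPU antiP; move Hc : #|U| => N.
elim: N U P Hc sPU antiP => [|N IH] U P cardU sPU antiP.
  have [UP|UnP] := boolP (U \in P).
    by rewrite (antichain_top sPU antiP UP) big_set1 cardU.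
  rewrite big_pred0 // => A; apply/negbTE/negP=> AP; apply: (negP UnP).
  suff /eqP <- : A == U by [].
  by rewrite eqEcard cardU -powersetE (subsetP sPU).
have [UP|UnP] := boolP (U \in P).
  by rewrite (antichain_top sPU antiP UP) big_set1 cardU subnn fact0 muln1.
have subU A : A \in P -> A \subset U by move/(subsetP sPU); rewrite powersetE.
have leAN A : A \in P -> #|A| <= N.
  move=> AP; rewrite -ltnS -cardU proper_card // properEneq subU // andbT.
  by apply: contraNneq UnP => <-.
(* Split each term over the points of U outside A and exchange the sums: the
   inner sums are the LYM sums of the antichains of U :\ x. *)
have split_out A : A \in P ->
    #|A|`! * (N.+1 - #|A|)`! = \sum_(x in U | x \notin A) #|A|`! * (N - #|A|)`!.
  move=> AP; rewrite sum_nat_const.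
  have -> : #|[pred x in U | x \notin A]| = N.+1 - #|A|.
    rewrite -cardU -(cardsID A U) (setIidPr (subU A AP)) addKn.
    by apply: eq_card => x; rewrite !inE andbC.
  by rewrite subSn ?leAN // factS mulnCA.
rewrite (eq_bigr _ split_out) (exchange_big_dep (mem U)) /=; last by move=> A x _ /andP[].
rewrite factS -cardU -sum_nat_const; apply: leq_sum => x Ux.
have -> : \sum_(A in P | (x \in U) && (x \notin A)) #|A|`! * (N - #|A|)`! =
          \sum_(A in [set A in P | x \notin A]) #|A|`! * (N - #|A|)`!.
  by apply: eq_bigl => A; rewrite !inE Ux.
apply: (IH (U :\ x)).
- by move: cardU; rewrite (cardsD1 x) Ux add1n; case.
- apply/subsetP=> A; rewrite !inE => /andP[AP xA].
  apply/subsetP=> y yA; rewrite !inE (subsetP (subU A AP)) // andbT.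
  by apply: contraNneq xA => <-.
- by move=> A B; rewrite !inE => /andP[AP _] /andP[BP _]; apply: antiP.
Qed.

Theorem sperner (U : {set T}) (P : {set {set T}}) :
  P \subset powerset U -> antichain P -> #|P| <= 'C(#|U|, #|U|./2).
Proof.
move=> sPU antiP; set N := #|U|.
rewrite -(leq_pmul2r (fact_gt0 N)) -sum_nat_const.
apply: leq_trans (leq_mul (leqnn _) (lym sPU antiP)); rewrite big_distrr /=.
apply: leq_sum => A /(subsetP sPU); rewrite powersetE => /subset_leq_card leAN.
by rewrite -{1}(bin_fact leAN) leq_mul2r leq_bin_half orbT.
Qed.
End Sperner.

Lemma has_induced_antichainP n k (G : {set {set 'I_n}}) :
  has_induced_antichain k G <->
  exists P : {set {set 'I_n}}, [/\ P \subset G, antichain P & #|P| = k].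
Proof.
split=> [[f [f_inj [fG f_anti]]]|[P [sPG antiP cardP]]].
  exists (f @: [set: 'I_k]); split.
  - by apply/subsetP=> _ /imsetP[i _ ->].
  - by move=> _ _ /imsetP[i _ ->] /imsetP[j _ ->] /f_anti ->.
  - by rewrite card_imset ?cardsT ?card_ord.
have sizeP : size (enum P) = k by rewrite -cardE.
pose f (i : 'I_k) := nth set0 (enum P) i.
have fP i : f i \in P by rewrite -mem_enum mem_nth ?sizeP.
have f_inj : injective f.
  move=> i j /eqP; rewrite /f nth_uniq ?sizeP ?enum_uniq // => /eqP.
  exact: val_inj.
exists f; split=> //; split=> [i|i j]; first exact: (subsetP sPG).
by split=> [->//|/antiP]; rewrite !fP => /(_ isT isT) /f_inj.
Qed.

Lemma in_lowset n l (x : 'I_n) : (x \in lowset n l) = (x < l).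
Proof. by rewrite inE. Qed.

Lemma in_segment n a b (x : 'I_n) : (x \in segment n a b) = (a <= x < b).
Proof. by rewrite inE. Qed.

Lemma card_lowset n l : l <= n -> #|lowset n l| = l.
Proof.
move=> le_ln; have w_inj : injective (widen_ord le_ln) by move=> a b [] /val_inj.
rewrite -[RHS]card_ord -(card_image w_inj).
apply: eq_card => x; rewrite in_lowset; apply/idP/imageP=> [lt_xl|[y _ ->]].
  by exists (Ordinal lt_xl) => //; apply: val_inj.
exact: (ltn_ord y).
Qed.

Lemma card_segment n a b : a <= b <= n -> #|segment n a b| = b - a.
Proof.
case/andP=> le_ab le_bn.
have -> : segment n a b = lowset n b :\: lowset n a.
  by apply/setP=> x; rewrite !inE -leqNgt andbC.
rewrite cardsD (setIidPr _) ?card_lowset ?(leq_trans le_ab) //.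
by apply/subsetP=> x; rewrite !in_lowset => /leq_trans->.
Qed.

Lemma subsetID (T : finType) (C A B : {set T}) :
  (A \subset B) = (A :&: C \subset B :&: C) && (A :\: C \subset B :\: C).
Proof.
apply/idP/andP=> [sAB|[sI sD]]; first by rewrite setSI ?setSD.
rewrite -(setID A C) subUset (subset_trans sI (subsetIl _ _)).
exact: subset_trans sD (subsetDl _ _).
Qed.

Lemma incomparable_eq_card (T : finType) (A B : {set T}) :
  #|A| = #|B| -> A != B -> ~~ (A \subset B) && ~~ (B \subset A).
Proof.
move=> eq_card_AB neqAB; apply/andP; split; apply/negP.
  by move/(subset_cardP eq_card_AB)/setP => eqAB; rewrite eqAB eqxx in neqAB.
by move/(subset_cardP (esym eq_card_AB))/setP => eqBA; rewrite eqBA eqxx in neqAB.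
Qed.

Lemma geq_bigmin_cond (I : finType) (d : nat) (P : pred I) (F : I -> nat) i0 :
  P i0 -> \big[minn/d]_(i | P i) F i <= F i0.
Proof.
move=> Pi0; have : i0 \in index_enum I by rewrite mem_index_enum.
elim: (index_enum I) => //= i s IHs; rewrite inE big_cons => /predU1P[<-|/IHs].
  by rewrite Pi0 geq_minl.
by case: (P i) => // /(leq_trans (geq_minr _ _)).
Qed.

Section Family.
Variables n m : nat.
Local Notation l := m.*2.+1.
Hypothesis lt_ln : l < n.

Local Notation low := (lowset n l).
Local Notation seg t := (segment n l (l + t)).
Local Notation middle := [set S : {set 'I_n} | S \subset low & #|S| == m].

Lemma seg0 : seg 0 = set0.
Proof. by apply/setP=> x; rewrite in_segment inE addn0; lia. Qed.

Lemma subset_seg t u : t <= u -> seg t \subset seg u.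
Proof. by move=> le_tu; apply/subsetP=> x; rewrite !in_segment; lia. Qed.

Lemma seg_max : seg (n - l) = ~: low.
Proof. by apply/setP=> x; rewrite in_segment inE in_lowset; have := ltn_ord x; lia. Qed.

Lemma card_seg t : t <= n - l -> #|seg t| = t.
Proof. by move=> le_t; rewrite card_segment ?addKn //; lia. Qed.

Lemma segU_low (S : {set 'I_n}) t : S \subset low -> (S :|: seg t) :&: low = S.
Proof.
move=> sS; apply/setP=> x; rewrite !inE; have [/(subsetP sS)|] := boolP (x \in S).
  by rewrite in_lowset => ->.
by move=> _; lia.
Qed.

Lemma segU_high (S : {set 'I_n}) t : S \subset low -> (S :|: seg t) :\: low = seg t.
Proof.
move=> sS; apply/setP=> x; rewrite !inE; have [/(subsetP sS)|] := boolP (x \in S).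
  by rewrite in_lowset; lia.
by move=> _; lia.
Qed.

Lemma segU_inj (S S' : {set 'I_n}) t t' : S \subset low -> S' \subset low ->
  t <= n - l -> t' <= n - l -> S :|: seg t = S' :|: seg t' -> S = S' /\ t = t'.
Proof.
move=> sS sS' le_t le_t' eqX; split.
  by rewrite -(segU_low t sS) -(segU_low t' sS') eqX.
by rewrite -(card_seg le_t) -(card_seg le_t') -(segU_high t sS) -(segU_high t' sS') eqX.
Qed.

Lemma subset_segU (X S : {set 'I_n}) t : S \subset low ->
  (X \subset S :|: seg t) = (X :&: low \subset S) && (X :\: low \subset seg t).
Proof. by move=> sS; rewrite (subsetID low) segU_low ?segU_high. Qed.

Lemma segU_subset (X S : {set 'I_n}) t : S \subset low ->
  (S :|: seg t \subset X) = (S \subset X :&: low) && (seg t \subset X :\: low).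
Proof. by move=> sS; rewrite (subsetID low) segU_low ?segU_high. Qed.

Lemma famJ_eq : famJ n l = [set S : {set 'I_n} | S \subset low & #|S| <= m].
Proof. by rewrite /famJ succnK doubleK. Qed.

Lemma famK_eq :
  famK n l = [set p.1 :|: seg (val p.2).+1 | p in setX middle [set: 'I_(n - l)]].
Proof.
apply/setP=> X; rewrite inE; apply/existsP/imsetP.
  case=> t /existsP[S /and4P[/andP[t_gt0 le_t] sS /eqP cardS /eqP ->]].
  have lt_t : t.-1 < n - l by lia.
  exists (S, Ordinal lt_t); first by rewrite !inE /= sS cardS succnK doubleK eqxx.
  by rewrite /= prednK.
case=> [[S i]]; rewrite !inE /= andbT => /andP[sS cardS] ->.
have lt_i : i.+1 < n.+1 by have := ltn_ord i; lia.
exists (Ordinal lt_i); apply/existsP; exists S.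
by rewrite /= sS doubleK cardS ltn_ord eqxx.
Qed.

Lemma famL_eq :
  famL n l =
  [set S :|: seg (n - l) | S in [set S : {set 'I_n} | S \subset low & m < #|S|]].
Proof.
rewrite subnKC; last exact: ltnW.
apply/setP=> X; rewrite inE; apply/existsP/imsetP.
  case=> S /and3P[sS cardS /eqP ->]; exists S => //.
  by rewrite inE sS; move: cardS; rewrite /= doubleK.
case=> S; rewrite inE => /andP[sS cardS] ->; exists S.
by rewrite sS eqxx /= doubleK cardS.
Qed.

Lemma famFP X :
  X \in famF n l <-> exists (S : {set 'I_n}) t, [/\ S \subset low, t <= n - l,
    X = S :|: seg t, 0 < t -> m <= #|S| & t < n - l -> #|S| <= m].
Proof.
rewrite /famF famJ_eq famK_eq famL_eq !inE; split.
  case/orP=> [/orP[/andP[sX le_X]|]|].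
  - by exists X, 0; rewrite seg0 setU0.
  - case/imsetP=> -[S i] /setXP[/setIdP[sS /eqP cardS] _] ->.
    by exists S, i.+1; rewrite cardS; split.
  - case/imsetP=> S /setIdP[sS lt_S] ->.
    by exists S, (n - l); split=> //; [move=> _; exact: ltnW | rewrite ltnn].
case=> S [t [sS le_t -> lo hi]].
have [t0|t_gt0] := posnP t.
  by subst t; rewrite seg0 setU0 sS hi ?subn_gt0.
have [cardS|neqS] := eqVneq #|S| m.
  have lt_t : t.-1 < n - l by lia.
  apply/orP; left; apply/orP; right; apply/imsetP; exists (S, Ordinal lt_t).
    by rewrite !inE /= sS cardS eqxx.
  by rewrite /= prednK.
have -> : t = n - l.
  apply/eqP; rewrite eqn_leq le_t leqNgt; apply: contra neqS => /hi le_S.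
  by rewrite eqn_leq le_S lo.
apply/orP; right; apply/imsetP; exists S => //.
by rewrite inE sS ltn_neqAle eq_sym neqS lo.
Qed.

Lemma famF_comparable X Y : X \in famF n l -> Y \in famF n l ->
  X :&: low \subset Y :&: low -> X \subset Y \/ Y \subset X.
Proof.
case/famFP=> S [t [sS le_t -> loS hiS]] /famFP[S' [t' [sS' le_t' -> loS' hiS']]].
rewrite !segU_low // => sSS'.
have [le_tt'|lt_t't] := leqP t t'; first by left; rewrite setUSS // subset_seg.
have le_S'S : #|S'| <= #|S|.
  exact: leq_trans (hiS' (leq_trans lt_t't le_t)) (loS (leq_ltn_trans _ lt_t't)).
have -> : S = S' by apply/eqP; rewrite eqEcard sSS' le_S'S.
by right; rewrite setUS // subset_seg // ltnW.
Qed.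

Lemma famF_no_antichain : ~ has_induced_antichain 'C(l, m).+1 (famF n l).
Proof.
case/has_induced_antichainP=> P [/subsetP sPF antiP cardP].
have trace_inj A B : A \in P -> B \in P -> A :&: low \subset B :&: low -> A = B.
  move=> AP BP /(famF_comparable (sPF A AP) (sPF B BP)) [sAB|sBA].
    exact: antiP.
  by apply/esym/antiP.
suff : #|[set A :&: low | A in P]| <= 'C(l, m).
  rewrite card_in_imset ?cardP ?ltnn // => A B AP BP eqAB.
  by apply: trace_inj; rewrite ?eqAB.
have := @sperner _ low [set A :&: low | A in P].
rewrite card_lowset; last exact: ltnW.
rewrite /= uphalf_double; apply.
  by apply/subsetP=> _ /imsetP[A _ ->]; rewrite powersetE subsetIr.
by move=> _ _ /imsetP[A AP ->] /imsetP[B BP ->] /(trace_inj A B AP BP) ->.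
Qed.

Lemma incomparable_level X : X \notin famF n l ->
  exists2 t, t <= n - l & forall S : {set 'I_n}, S \subset low -> #|S| = m ->
    ~~ (X \subset S :|: seg t) && ~~ (S :|: seg t \subset X).
Proof.
move=> XnF; set S := X :&: low; set R := X :\: low.
have sRhigh : R \subset seg (n - l) by rewrite seg_max /R setDE subsetIr.
have R_notseg t : t <= n - l -> (0 < t -> m <= #|S|) -> (t < n - l -> #|S| <= m) ->
    R != seg t.
  move=> le_t lo hi; apply: contraNneq XnF => eqR; apply/famFP.
  by exists S, t; split; rewrite ?subsetIr // -eqR setID.
have [ltmS|ltSm|eqSm] := ltngtP m #|S|.
- exists (n - l) => // S' sS' cardS'; rewrite subset_segU // segU_subset //.
  apply/andP; split; apply/negP=> /andP[sub_low sub_high].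
    by move: (subset_leq_card sub_low); rewrite cardS' leqNgt ltmS.
  have: R != seg (n - l) by apply: R_notseg; rewrite ?ltnn // => _; exact: ltnW.
  by rewrite eqEsubset sRhigh sub_high.
- exists 0 => // S' sS' cardS'; rewrite subset_segU // segU_subset //.
  apply/andP; split; apply/negP=> /andP[sub_low sub_high].
    have: R != seg 0 by apply: R_notseg => // _; exact: ltnW.
    by rewrite eqEsubset sub_high seg0 sub0set.
  by move: (subset_leq_card sub_low); rewrite cardS' leqNgt ltSm.
- have le_R : #|R| <= n - l by rewrite -(card_seg (leqnn _)) subset_leq_card.
  have /andP[nsub_Rseg nsub_segR] : ~~ (R \subset seg #|R|) && ~~ (seg #|R| \subset R).
    by apply: incomparable_eq_card; rewrite ?card_seg // R_notseg // eqSm.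
  exists #|R| => // S' sS' _; rewrite subset_segU // segU_subset //.
  by rewrite (negbTE nsub_Rseg) (negbTE nsub_segR) !andbF.
Qed.

Lemma famF_saturated (G : {set {set 'I_n}}) :
  famF n l \proper G -> has_induced_antichain 'C(l, m).+1 G.
Proof.
case/properP=> sFG [X XG XnF]; have [t le_t incmpX] := incomparable_level XnF.
pose level := [set S :|: seg t | S in middle].
have level_inj : {in middle &, injective (fun S => S :|: seg t)}.
  by move=> S S' /setIdP[sS _] /setIdP[sS' _] /segU_inj[].
have levelF : level \subset famF n l.
  apply/subsetP=> _ /imsetP[S /setIdP[sS /eqP cardS] ->]; apply/famFP.
  by exists S, t; split; rewrite ?cardS.
apply/has_induced_antichainP; exists (X |: level); split.
- by rewrite subUset sub1set XG (subset_trans levelF sFG).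
- move=> A B /setU1P[->|/imsetP[S /setIdP[sS /eqP cardS] ->]]
              /setU1P[->|/imsetP[S' /setIdP[sS' /eqP cardS'] ->]] //.
  + by have /andP[/negbTE-> _] := incmpX S' sS' cardS'.
  + by have /andP[_ /negbTE->] := incmpX S sS cardS.
  + move/(setSI low); rewrite !segU_low // => sSS'.
    by have -> : S = S' by apply/eqP; rewrite eqEcard sSS' cardS cardS' leqnn.
- have XnL : X \notin level := contraNN (subsetP levelF X) XnF.
  rewrite cardsU1 XnL card_in_imset // cards_draws card_lowset //; exact: ltnW.
Qed.

Lemma card_famK : #|famK n l| = 'C(l, m) * (n - l).
Proof.
rewrite famK_eq card_in_imset; last first.
  move=> [S i] [S' j] /setXP[/setIdP[sS _] _] /setXP[/setIdP[sS' _] _] /=.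
  by case/(segU_inj sS sS' (ltn_ord i) (ltn_ord j)) => -> /succn_inj/val_inj->.
by rewrite cardsX cardsT card_ord cards_draws card_lowset // ltnW.
Qed.

Lemma card_famJL : #|famJ n l| + #|famL n l| = 2 ^ l.
Proof.
rewrite famJ_eq famL_eq card_in_imset; last first.
  by move=> S S' /setIdP[sS _] /setIdP[sS' _] /segU_inj[].
rewrite -{3}(card_lowset (ltnW lt_ln)) -card_powerset.
rewrite -(cardsID [set S : {set 'I_n} | #|S| <= m] (powerset low)).
by congr (_ + _); apply: eq_card => S; rewrite !inE -?ltnNge andbC.
Qed.

Lemma famF_card : #|famF n l| = 2 ^ l + (n - l) * 'C(l, m).
Proof.
pose x := Ordinal lt_ln.
have x_notJ X : X \in famJ n l -> x \notin X.
  rewrite famJ_eq inE => /andP[sX _]; apply: contraNN _ (_ : x \notin low).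
    exact: (subsetP sX).
  by rewrite in_lowset ltnn.
have x_inK X : X \in famK n l -> x \in X.
  by rewrite famK_eq => /imsetP[[S i] _ ->]; rewrite !inE /=; lia.
have x_inL X : X \in famL n l -> x \in X.
  by rewrite famL_eq => /imsetP[S _ ->]; rewrite !inE /=; lia.
have card_trace_inj X : X \in famK n l -> #|X :&: low| = m.
  rewrite famK_eq => /imsetP[[S i] /setXP[/setIdP[sS /eqP cardS] _] ->].
  by rewrite segU_low.
have card_lowL X : X \in famL n l -> m < #|X :&: low|.
  rewrite famL_eq => /imsetP[S /setIdP[sS cardS] ->].
  by rewrite segU_low.
have disjJK : [disjoint famJ n l & famK n l].
  rewrite disjoints_subset; apply/subsetP=> X XJ; rewrite in_setC.
  exact: contra (x_inK X) (x_notJ X XJ).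
have disjJKL : [disjoint famJ n l :|: famK n l & famL n l].
  rewrite disjoints_subset; apply/subsetP=> X; rewrite in_setC in_setU => /orP[XJ|XK].
    exact: contra (x_inL X) (x_notJ X XJ).
  by apply/negP=> /card_lowL; rewrite card_trace_inj ?ltnn.
rewrite /famF !cardsU !disjoint_setI0 // !cards0 !subn0 card_famK.
by rewrite -card_famJL addnAC mulnC.
Qed.
End Family.

Theorem mainTheorem2 (l k n : nat) (Hodd : odd l) (Hl : 3 <= l)
    (Hk : k = 'C(l, (l.-1)./2)) (Hn : k < n) :
  induced_antichain_saturated k.+1 (famF n l) /\
  #|famF n l| = 2 ^ l + (n - l) * k /\
  isat_antichain n k.+1 <= 2 ^ l + (n - l) * k.
Proof.
have [m def_l] : exists m, l = m.*2.+1.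
  by exists l./2; rewrite -{1}(odd_double_half l) Hodd add1n.
subst l; rewrite succnK doubleK in Hk; subst k.
have lt_ln : m.*2.+1 < n.
  apply: leq_ltn_trans Hn; have := leq_bin_half m.*2.+1 1.
  by rewrite bin1 /= uphalf_double.
have sat : induced_antichain_saturated 'C(m.*2.+1, m).+1 (famF n m.*2.+1).
  by split; [exact: famF_no_antichain | exact: famF_saturated].
have card_F := famF_card lt_ln.
split=> //; split=> //; rewrite -card_F; apply: geq_bigmin_cond.
by rewrite /sat_b; case: excluded_middle_informative.
Qed.
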